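(* For every positive integer $n$, as formal power series in $z$, \[ \frac{(-tzq;q)_{n}}{(zq;q)_{n}} = 1+ \sum_{k \geq 1} z^k q^k \left( \overline{{ n+k-1 \brack k}}_{q,t} + t\, \overline{ { n+k-2 \brack k-1}}_{q,t} \right). \]
   Context: An overpartition is a partition in which the last occurrence of each distinct part size may be overlined; its weight $|\lambda|$ is the sum of its parts. For integers $0\le b\le a$, $\overline{{a \brack b}}_{q,t}=\sum_{\lambda} t^{\#_o(\lambda)} q^{|\lambda|}$, the sum over all overpartitions $\lambda$ with largest part at most $a-b$ and at most $b$ parts, $\#_o(\lambda)$ being the number of overlined parts. $(x;q)_k=\prod_{j=1}^k(1-xq^{j-1})$. *)

From HB Require Import structures.
From mathcomp Require Import all_boot all_order all_algebra.
From mathcomp Require Import mpoly.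
Set Implicit Arguments. Unset Strict Implicit. Unset Printing Implicit Defensive.
Import GRing.Theory.
Local Open Scope ring_scope.

(* Coefficient ring: Z[q,t] with q = 'X_0 and t = 'X_1. *)
Definition K := {mpoly int[2]}.
Definition qv : K := 'X_(@Ordinal 2 0 isT).
Definition tv : K := 'X_(@Ordinal 2 1 isT).

(* An overpartition with largest part <= m and at most b parts is encoded by
   f : 'I_m -> 'I_(b.+1) * bool : (f i).1 = multiplicity of the part size i+1,
   (f i).2 = whether the last occurrence of part size i+1 is overlined
   (only allowed if that size occurs). *)
Definition ovp_valid (m b : nat) (f : {ffun 'I_m -> 'I_b.+1 * bool}) : bool :=
  [forall i, (f i).2 ==> (0 < (f i).1)%N] && (\sum_(i < m) (f i).1 <= b)%N.

Definition ovp_weight (m b : nat) (f : {ffun 'I_m -> 'I_b.+1 * bool}) : nat :=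
  \sum_(i < m) (i.+1 * (f i).1)%N.

Definition ovp_noverlined (m b : nat) (f : {ffun 'I_m -> 'I_b.+1 * bool}) : nat :=
  #|[set i | (f i).2]|.

(* overline [a brack b]_{q,t} : largest part <= a - b, at most b parts. *)
Definition obin (a b : nat) : K :=
  \sum_(f : {ffun 'I_(a - b) -> 'I_b.+1 * bool} | ovp_valid f)
     tv ^+ ovp_noverlined f * qv ^+ ovp_weight f.

(* Power series in z are represented via polynomials {poly K} in z = 'X. *)
(* (x;q)_n with x = c z :  prod_{j<n} (1 - c q^j z) *)
Definition qpoch_z (c : K) (n : nat) : {poly K} :=
  \prod_(j < n) (1 - (c * qv ^+ j) *: 'X).

Definition rhs_trunc (n N : nat) : {poly K} :=
  1 + \sum_(1 <= k < N.+1)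
        (qv ^+ k * (obin (n + k - 1) k + tv * obin (n + k - 2) (k - 1))) *: 'X^k.

From HB Require Import structures.
From mathcomp Require Import all_boot all_order all_algebra.
From mathcomp Require Import mpoly.
From mathcomp Require Import ring zify.

(* For each part size i+1 <= m, the factor 1 + (1 + t) sum_(c >= 1) (q^(i+2) z)^c of [ovp_gf]
   records the multiplicity c of that size and whether its last copy is overlined: besides
   q^((i+1) c) it carries (q z)^c.  Multiplying by 1/(1 - q z) pads the number of parts up to b,
   so the coefficient of z^b is q^b times the generating function of the overpartitions with
   largest part <= m and at most b parts, i.e. q^b * obin (m + b) b.  On the other hand each factor is
   (1 + t q^(i+2) z)/(1 - q^(i+2) z), so modulo z^(N+1) the right-hand side, which is
   (1 + t q z) [ovp_gf m N], is (-t z q; q)_(m+1) / (z q; q)_(m+1). *)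

Import GRing.Theory.
Local Open Scope ring_scope.

Section TruncatedEquality.
Context {R : nzRingType}.
Implicit Types p r : {poly R}.

Definition trunc_eq (N : nat) p r := forall i, (i <= N)%N -> p`_i = r`_i.

Lemma trunc_eqM {N p p' r r'} :
  trunc_eq N p p' -> trunc_eq N r r' -> trunc_eq N (p * r) (p' * r').
Proof.
move=> epp' err' i iN; rewrite !coefM; apply: eq_bigr => j _.
have ji := leq_ord j.
by rewrite epp' ?err' //; lia.
Qed.

Lemma trunc_eq_prod N I (s : seq I) (P : pred I) (F G : I -> {poly R}) :
  (forall i, P i -> trunc_eq N (F i) (G i)) ->
  trunc_eq N (\prod_(i <- s | P i) F i) (\prod_(i <- s | P i) G i).
Proof.
move=> eFG; apply: (big_ind2 (trunc_eq N)) => //.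
by move=> ? ? ? ? /trunc_eqM; apply.
Qed.

End TruncatedEquality.

Section GeometricSeries.
Context {R : comNzRingType}.
Implicit Types a t : R.

Lemma trunc_eq_sub_powZX N (p r : {poly R}) a : trunc_eq N (p - (a *: 'X) ^+ N.+1 * r) p.
Proof.
move=> i iN; rewrite coefB exprZn -scalerAl coefZ coefXnM ltnS iN.
by rewrite mulr0 subr0.
Qed.

Definition geosum a (M : nat) : {poly R} := \sum_(1 <= k < M.+1) a ^+ k *: 'X^k.

Lemma coef_geosum a M j : (geosum a M)`_j = if (0 < j <= M)%N then a ^+ j else 0.
Proof. by rewrite coef_sumMXn big_nat1_eq. Qed.

Lemma coef_geosum1 a M j : (1 + geosum a M)`_j = if (j <= M)%N then a ^+ j else 0.
Proof. by rewrite coefD coef1 coef_geosum; case: j => [|j] /=; rewrite ?addr0 ?add0r. Qed.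

Lemma trunc_eq_geosum c a k N : (k <= N)%N ->
  trunc_eq k (1 + c *: geosum a N) (1 + c *: geosum a k).
Proof.
move=> kN j jk; rewrite !(coefD, coefZ, coef_geosum) jk.
by have -> : (j <= N)%N by lia.
Qed.

Lemma mul_geosum a M : (1 - a *: 'X) * (1 + geosum a M) = 1 - (a *: 'X) ^+ M.+1.
Proof.
have -> : 1 + geosum a M = \sum_(k < M.+1) (a *: 'X) ^+ k.
  rewrite -(big_mkord xpredT) big_ltn // expr0.
  by under eq_bigr do rewrite exprZn.
by rewrite -opprB mulNr -subrX1 opprB.
Qed.

Definition ovp_factor t a (M : nat) : {poly R} := 1 + (1 + t) *: geosum a M.

Lemma mul_ovp_factor_trunc t a N :
  trunc_eq N ((1 - a *: 'X) * ovp_factor t a N) (1 + (t * a) *: 'X).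
Proof.
have -> : (1 - a *: 'X) * ovp_factor t a N =
    1 + (t * a) *: 'X - (a *: 'X) ^+ N.+1 * (1 + t)%:P.
  rewrite /ovp_factor -[geosum a N](addKr 1) -(mul_polyC (1 + t)) mulrDr mulrCA mulrDr.
  rewrite mul_geosum -!mul_polyC polyCM polyCD polyC1; ring.
exact: trunc_eq_sub_powZX.
Qed.

Lemma mul_trunc_eq_geosum a N : trunc_eq N ((1 - a *: 'X) * (1 + geosum a N)) 1.
Proof. by rewrite mul_geosum -[_ ^+ _]mulr1; apply: trunc_eq_sub_powZX. Qed.

End GeometricSeries.

Section OverpartitionGeneratingFunction.
Variables m b : nat.

Definition ovp_term (i : 'I_m) (x : 'I_b.+1 * bool) : {poly K} :=
  if x.2 ==> (0 < x.1)%N then (tv ^+ x.2 * qv ^+ (i.+1 * x.1)) *: (qv *: 'X) ^+ x.1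
  else 0.

Lemma ovp_factorE (i : 'I_m) :
  ovp_factor tv (qv ^+ i.+2) b = \sum_(x : 'I_b.+1 * bool) ovp_term i x.
Proof.
rewrite -(pair_bigA _ (fun c o => ovp_term i (c, o))) /=.
under eq_bigr do rewrite big_bool.
rewrite big_ord_recl /ovp_term /= add0r muln0 !expr0 mulr1 scale1r.
rewrite /ovp_factor /geosum big_add1 big_mkord scaler_sumr; congr (_ + _).
apply: eq_bigr => j _; rewrite /bump /= add1n !exprZn !scalerA -!scalerDl.
have -> : qv ^+ i.+2 ^+ j.+1 = qv ^+ (i.+1 * j.+1) * qv ^+ j.+1.
  by rewrite -exprM -exprD; congr (_ ^+ _); lia.
by congr (_ *: _); ring.
Qed.

Lemma prod_ovp_term (f : {ffun 'I_m -> 'I_b.+1 * bool}) :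
  \prod_i ovp_term i (f i) =
    if [forall i, (f i).2 ==> (0 < (f i).1)%N] then
      (tv ^+ ovp_noverlined f * qv ^+ ovp_weight f) *: (qv *: 'X) ^+ (\sum_i (f i).1)
    else 0.
Proof.
case: ifPn => [/forallP valid | /forallPn [i invalid]]; last first.
  by rewrite (bigD1 i) //= /ovp_term (negbTE invalid) mul0r.
rewrite /ovp_term; under eq_bigr => i _ do rewrite valid.
rewrite scaler_prod big_split /= !prodrXr.
congr (tv ^+ _ * _ *: _).
rewrite /ovp_noverlined -sum1dep_card [RHS]big_mkcond /=.
by apply: eq_bigr => i _; case: (f i).2.
Qed.

End OverpartitionGeneratingFunction.

Definition ovp_gf (m N : nat) : {poly K} :=
  \prod_(i < m) ovp_factor tv (qv ^+ i.+2) N * (1 + geosum qv N).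

Lemma obin_coef m b : qv ^+ b * obin (m + b) b = (ovp_gf m b)`_b.
Proof.
rewrite /obin addnK /ovp_gf.
rewrite (eq_bigr _ (fun i _ => ovp_factorE m b i)).
rewrite bigA_distr_bigA /= mulr_suml coef_sum big_mkcond mulr_sumr /=.
apply: eq_bigr => f _; rewrite prod_ovp_term /ovp_valid.
case: [forall i, _] => /=; last by rewrite mulr0 mul0r coef0.
rewrite exprZn -!scalerAl !coefZ coefXnM.
case: ltnP => [_ | le_sum_b]; first by rewrite !mulr0.
by rewrite coef_geosum1 leq_subr -exprD subnKC // mulrC.
Qed.

Lemma trunc_eq_ovp_gf m k N : (k <= N)%N -> trunc_eq k (ovp_gf m N) (ovp_gf m k).
Proof.
move=> le_kN; apply: trunc_eqM; last first.
  by have := trunc_eq_geosum 1 qv k N le_kN; rewrite !scale1r.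
by apply: trunc_eq_prod => i _; apply: trunc_eq_geosum.
Qed.

Lemma coef_ovp_gf m N k : (k <= N)%N -> (ovp_gf m N)`_k = qv ^+ k * obin (m + k) k.
Proof. by move=> le_kN; rewrite obin_coef (trunc_eq_ovp_gf m k N le_kN). Qed.

Lemma coef0_ovp_gf m N : (ovp_gf m N)`_0 = 1.
Proof.
rewrite coef0M coef0_prod coef_geosum1 big1 ?mul1r // => i _.
by rewrite coefD coef1 coefZ coef_geosum mulr0 addr0.
Qed.

Lemma rhs_trunc_ovp_gf m N :
  trunc_eq N (rhs_trunc m.+1 N) ((1 + (tv * qv) *: 'X) * ovp_gf m N).
Proof.
move=> j le_jN; rewrite mulrDl mul1r -scalerAl [RHS]coefD coefZ coefXM.
rewrite /rhs_trunc coefD coef1 coef_sumMXn big_nat1_eq.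
case: j le_jN => [|j] le_jN /=; first by rewrite coef0_ovp_gf mulr0 !addr0.
rewrite ltnS le_jN add0r !coef_ovp_gf ?(ltnW le_jN) //.
have -> : (m.+1 + j.+1 - 1 = m + j.+1)%N by lia.
have -> : (m.+1 + j.+1 - 2 = m + j)%N by lia.
by rewrite subn1 /= exprS; ring.
Qed.

Lemma qpoch_z_recl c n :
  qpoch_z c n.+1 = (1 - c *: 'X) * \prod_(j < n) (1 - (c * qv ^+ j.+1) *: 'X).
Proof. by rewrite /qpoch_z big_ord_recl expr0 mulr1. Qed.

Theorem theorem3p2 (n : nat) : (0 < n)%N ->
  forall N i : nat, (i <= N)%N ->
    (qpoch_z qv n * rhs_trunc n N)`_i = (qpoch_z (- (tv * qv)) n)`_i.
Proof.
case: n => // m _ N i le_iN.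
rewrite (trunc_eqM (fun _ _ => erefl) (rhs_trunc_ovp_gf m N) i le_iN).
set F := fun j : 'I_m => ovp_factor tv (qv ^+ j.+2) N.
have -> : qpoch_z qv m.+1 * ((1 + (tv * qv) *: 'X) * ovp_gf m N) =
    ((1 - qv *: 'X) * (1 + geosum qv N)) *
    ((1 + (tv * qv) *: 'X) * \prod_(j < m) ((1 - qv ^+ j.+2 *: 'X) * F j)).
  rewrite qpoch_z_recl /ovp_gf big_split /=.
  under eq_bigr do rewrite -exprS.
  ring.
have -> : qpoch_z (- (tv * qv)) m.+1 =
    1 * ((1 + (tv * qv) *: 'X) * \prod_(j < m) (1 + (tv * qv ^+ j.+2) *: 'X)).
  rewrite qpoch_z_recl mul1r scaleNr opprK.
  by under eq_bigr do rewrite mulNr scaleNr opprK -mulrA -exprS.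
move: i le_iN; apply: trunc_eqM; first exact: mul_trunc_eq_geosum.
apply: trunc_eqM => //; apply: trunc_eq_prod => j _.
exact: mul_ovp_factor_trunc.
Qed.
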